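(* Let $k$ be an algebraically closed field and let $A$ be a connected basic finite dimensional $k$-algebra which does not have a non-trivial grading. Then the (Gabriel) quiver of $A$ has exactly one vertex.
   Context: A grading on $A$ is a decomposition $A=\bigoplus_{i\in\mathbb{Z}}A_i$ into subspaces with $A_iA_j\subseteq A_{i+j}$ for all $i,j\in\mathbb{Z}$. The trivial grading is $A_0=A$; a grading is non-trivial if $A_i\neq 0$ for some $i\neq 0$. Here ''$A$ has a non-trivial grading'' means there is a non-trivial grading on an algebra isomorphic to $A$. Connected means $A$ is indecomposable as an algebra. *)

From HB Require Import structures.
From mathcomp Require Import all_boot all_order all_algebra all_field.
Set Implicit Arguments. Unset Strict Implicit. Unset Printing Implicit Defensive.
Import GRing.Theory.
Local Open Scope ring_scope.

(* Finite dimensional algebras over a field F are MathComp's [falgType F]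
   (unital, associative, finite dimensional, nonzero). *)
Section FinDimAlgebras.
Variables (F : fieldType) (A : falgType F).

(* A Z-grading: A = (+)_{i in Z} A_i with A_i A_j <= A_(i+j).  Since A is
   finite dimensional only finitely many A_i are nonzero; S lists the
   (candidate) nonzero degrees. *)
Definition is_Zgrading (V : int -> {vspace A}) : Prop :=
  exists S : seq int,
    [/\ uniq S,
        (forall i, i \notin S -> V i = 0%VS),
        (\sum_(i <- S) V i)%VS = fullv,
        directv (\sum_(i <- S) V i)
      & (forall (i j : int) (u v : A), u \in V i -> v \in V j -> u * v \in V (i + j))].

Definition nontrivial_grading (V : int -> {vspace A}) : Prop :=
  exists i : int, i != 0 /\ V i != 0%VS.

Definition has_nontrivial_grading : Prop :=
  exists V, is_Zgrading V /\ nontrivial_grading V.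

Definition is_ideal (I : {vspace A}) : Prop :=
  forall a x, x \in I -> (a * x \in I) /\ (x * a \in I).

(* connected = indecomposable as an algebra: A is not the (internal) direct
   product of two nonzero two-sided ideals. *)
Definition connected_alg : Prop :=
  forall I J : {vspace A}, is_ideal I -> is_ideal J ->
    (I + J)%VS = fullv -> (I :&: J)%VS = 0%VS -> I = 0%VS \/ J = 0%VS.

(* Jacobson radical (standard element-wise characterisation). *)
Definition in_rad (x : A) : Prop := forall a : A, (1 - a * x) \is a GRing.unit.

(* basic: A / rad A is isomorphic to k x ... x k (n copies), i.e. there are
   n unital algebra maps phi_i : A -> k such that (phi_1,...,phi_n) : A -> k^n
   is surjective with kernel rad A. *)
Definition basic_alg : Prop :=
  exists (n : nat) (phi : 'I_n -> A -> F),
    [/\ (forall i (c : F) (a b : A), phi i (c *: a + b) = c * phi i a + phi i b),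
        (forall i (a b : A), phi i (a * b) = phi i a * phi i b),
        (forall i, phi i 1 = 1),
        (forall c : 'I_n -> F, exists a : A, forall i, phi i a = c i)
      & (forall a : A, (forall i, phi i a = 0) <-> in_rad a)].

Definition idem (e : A) : Prop := e * e = e.

Definition primitive_idem (e : A) : Prop :=
  idem e /\ e != 0 /\
  forall e1 e2 : A, idem e1 -> idem e2 -> e1 * e2 = 0 -> e2 * e1 = 0 ->
    e = e1 + e2 -> e1 = 0 \/ e2 = 0.

Definition complete_primitive_set (s : seq A) : Prop :=
  [/\ (forall i, (i < size s)%N -> primitive_idem s`_i),
      (forall i j, (i < size s)%N -> (j < size s)%N -> i != j -> s`_i * s`_j = 0)
    & \sum_(e <- s) e = 1].

(* For a basic algebra A the vertices of its Gabriel quiver Q_A are in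
   bijection with the members of a complete set of primitive orthogonal
   idempotents.  "Q_A has exactly n vertices": *)
Definition quiver_num_vertices (n : nat) : Prop :=
  (exists s, complete_primitive_set s /\ size s = n) /\
  (forall s, complete_primitive_set s -> size s = n).

End FinDimAlgebras.

From HB Require Import structures.
From mathcomp Require Import all_boot all_order all_algebra all_field.
Set Implicit Arguments. Unset Strict Implicit. Unset Printing Implicit Defensive.
Import GRing.Theory.
Local Open Scope ring_scope.
(* A connected algebra without non-trivial grading has no idempotents other
   than 0 and 1, so [:: 1] is its only complete set of primitive
   orthogonal idempotents.  Integer weights on a complete set of orthogonal
   idempotents (e_i) grade A: e_i A e_j gets degree w_j - w_i.  For an
   idempotent e with f = 1 - e, weights 1 on e and 0 on f put fAe in degree 1
   and eAf in degree -1; as no such grading is non-trivial, eAf = fAe = 0.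
   Then e is central, A = eAe (+) fAf is a product of two ideals, and
   connectedness forces e = 0 or e = 1. *)

Section PeirceSpaces.
Variables (F : fieldType) (A : falgType F).

Definition peirce (a b : A) : {vspace A} := limg (amull a \o amulr b)%VF.

Lemma peirce_corner (a b x : A) : a * x * b \in peirce a b.
Proof.
have -> : a * x * b = (amull a \o amulr b)%VF x by rewrite comp_lfunE !lfunE /= mulrA.
exact/memv_img/memvf.
Qed.

Lemma memv_peirce (a b x : A) :
  idem a -> idem b -> reflect (a * x * b = x) (x \in peirce a b).
Proof.
move=> aa bb; apply: (iffP memv_imgP) => [[u _ ->]|<-]; last first.
  by exists x; rewrite ?memvf // comp_lfunE !lfunE /= mulrA.
by rewrite comp_lfunE !lfunE /= !mulrA aa -mulrA bb.
Qed.

Section OrthogonalIdempotents.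
Variables (I : finType) (e : I -> A).
Hypotheses (mul_e : forall i j, e i * e j = if i == j then e i else 0)
           (sum_e : \sum_i e i = 1).

Lemma peirce_decomposition x : x = \sum_(ij : I * I) e ij.1 * x * e ij.2.
Proof.
rewrite -(pair_bigA _ (fun i j => e i * x * e j)) /=.
rewrite -{1}[x]mulr1 -{1}[x]mul1r -sum_e !mulr_suml.
by apply: eq_bigr => i _; rewrite mulr_sumr.
Qed.

Lemma corner_corner i j k l x :
  e i * (e k * x * e l) * e j = if (i == k) && (l == j) then e k * x * e l else 0.
Proof.
rewrite !mulrA -(mulrA _ (e l)) (mul_e l) (mul_e i).
by case: eqP => [->|]; case: eqP => [->|] //= _; rewrite !(mulr0, mul0r).
Qed.

Lemma idem_e i : idem (e i).
Proof. by rewrite /idem mul_e eqxx. Qed.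

Variable w : I -> int.

Definition peirce_degree (ij : I * I) : int := w ij.2 - w ij.1.

Definition weight_grading (n : int) : {vspace A} :=
  (\sum_(ij | peirce_degree ij == n) peirce (e ij.1) (e ij.2))%VS.

Definition weight_degrees : seq int := undup (codom peirce_degree).

Lemma peirce_degreeD i j k :
  peirce_degree (i, k) + peirce_degree (k, j) = peirce_degree (i, j).
Proof. by rewrite /peirce_degree /= addrC addrA subrK. Qed.

Lemma corner_weight_grading ij x :
  e ij.1 * x * e ij.2 \in weight_grading (peirce_degree ij).
Proof.
have /subvP : (peirce (e ij.1) (e ij.2) <= weight_grading (peirce_degree ij))%VS.
  exact: (sumv_sup ij).
by apply; apply: peirce_corner.
Qed.

Lemma weight_gradingP n u :
  reflect (forall ij, peirce_degree ij != n -> e ij.1 * u * e ij.2 = 0)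
          (u \in weight_grading n).
Proof.
apply: (iffP memv_sumP) => [[us us_peirce ->] [i j] /= ij_n | corner0].
  rewrite mulr_sumr mulr_suml big1 // => [[k l]] /= kl_n.
  have /memv_peirce-/(_ (idem_e k) (idem_e l)) <- := us_peirce _ kl_n.
  rewrite corner_corner; case: ifP => // /andP[/eqP ik /eqP lj].
  by rewrite ik -lj kl_n in ij_n.
exists (fun ij => e ij.1 * u * e ij.2) => [ij _|]; first exact: peirce_corner.
rewrite {1}[u]peirce_decomposition (bigID (fun ij => peirce_degree ij == n)) /=.
by rewrite [X in _ + X]big1 ?addr0 // => ij /corner0.
Qed.

Lemma weight_grading_mul m n u v :
  u \in weight_grading m -> v \in weight_grading n -> u * v \in weight_grading (m + n).
Proof.
move=> /weight_gradingP u_m /weight_gradingP v_n.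
apply/weight_gradingP => -[i j] /= ij_mn.
have -> : e i * (u * v) * e j = e i * u * (\sum_k e k) * (v * e j).
  by rewrite sum_e mulr1 !mulrA.
rewrite mulr_sumr mulr_suml big1 // => k _.
rewrite -(idem_e k).
have -> : e i * u * (e k * e k) * (v * e j) = (e i * u * e k) * (e k * v * e j).
  by rewrite !mulrA.
have [ik_m|/u_m/= ->] := eqVneq (peirce_degree (i, k)) m; last by rewrite mul0r.
rewrite (v_n (k, j)) ?mulr0 //; apply: contra ij_mn => /eqP kj_n.
by rewrite -(peirce_degreeD i j k) ik_m kj_n.
Qed.

Lemma weight_grading_full : (\sum_(n <- weight_degrees) weight_grading n)%VS = fullv.
Proof.
apply/vspaceP => x; rewrite memvf [x]peirce_decomposition.
apply: memv_suml => ij _; have /subvP : (weight_grading (peirce_degree ij) <=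
    \sum_(n <- weight_degrees) weight_grading n)%VS.
  by rewrite (bigD1_seq (peirce_degree ij)) ?undup_uniq ?mem_undup ?codom_f ?addvSl.
by apply; apply: corner_weight_grading.
Qed.

Lemma weight_grading_sum_corner0 r m u ij :
  m \notin r -> u \in (\sum_(n <- r) weight_grading n)%VS ->
  peirce_degree ij = m -> e ij.1 * u * e ij.2 = 0.
Proof.
move=> + + ij_m; elim: r u => [|n r IH] u.
  by rewrite big_nil memv0 => _ /eqP->; rewrite mulr0 mul0r.
rewrite big_cons in_cons negb_or => /andP[m_n m_r] /memv_addP[u1 u1_n [u2 u2_r ->]].
rewrite mulrDr mulrDl (IH u2) // addr0; apply: (weight_gradingP _ _ u1_n).
by rewrite ij_m.
Qed.

Lemma dim_weight_grading_sum r : uniq r ->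
  \dim (\sum_(n <- r) weight_grading n) = \sum_(n <- r) \dim (weight_grading n).
Proof.
elim: r => [|n r IH]; first by rewrite !big_nil dimv0.
rewrite /= => /andP[n_r r_uniq]; rewrite !big_cons -IH //.
apply: dimv_disjoint_sum; apply/eqP; rewrite -subv0; apply/subvP => u.
case/memv_capP => u_n u_r; rewrite memv0 [u]peirce_decomposition big1 // => ij _.
have [ij_n|] := eqVneq (peirce_degree ij) n; last exact: (weight_gradingP _ _ u_n).
exact: weight_grading_sum_corner0 n_r u_r ij_n.
Qed.

Lemma weight_grading_is_Zgrading : is_Zgrading weight_grading.
Proof.
exists weight_degrees; split.
- exact: undup_uniq.
- move=> n n_deg; apply: big_pred0 => ij; apply/negbTE; apply: contraNneq n_deg => <-.
  by rewrite mem_undup codom_f.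
- exact: weight_grading_full.
- by rewrite directvE /= dim_weight_grading_sum ?undup_uniq.
- exact: weight_grading_mul.
Qed.

End OrthogonalIdempotents.
End PeirceSpaces.

Section ComplementaryIdempotents.
Variables (F : fieldType) (A : falgType F) (e : A).
Hypothesis e_idem : idem e.

Definition idem_split (b : bool) : A := if b then e else 1 - e.

Lemma mul_idem_split b c :
  idem_split b * idem_split c = if b == c then idem_split b else 0.
Proof.
have eE : e * e = e := e_idem.
by case: b; case: c; rewrite /= ?mulrBl ?mulrBr ?mul1r ?mulr1 eE ?subrr ?subr0.
Qed.

Lemma sum_idem_split : \sum_b idem_split b = 1.
Proof. by rewrite big_bool /= addrC subrK. Qed.

Lemma ungraded_idem_central :
  ~ has_nontrivial_grading A -> forall a, e * a = a * e.
Proof.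
move=> ungraded a; pose w (b : bool) : int := b.
have grV := weight_grading_is_Zgrading mul_idem_split sum_idem_split w.
have corner0 b c x : b != c -> idem_split b * x * idem_split c = 0.
  move=> bc; have deg_nz : peirce_degree w (b, c) != 0 by case: b c bc => -[].
  apply/eqP; rewrite -memv0.
  have [<-|V_nz] := eqVneq (weight_grading idem_split w (peirce_degree w (b, c))) 0%VS.
    exact: (corner_weight_grading idem_split w (b, c)).
  case: ungraded; exists (weight_grading idem_split w); split; first exact: grV.
  by exists (peirce_degree w (b, c)).
have /eqP := corner0 true false a isT; rewrite /= mulrBr mulr1 subr_eq0 => /eqP ->.
by have /eqP := corner0 false true a isT; rewrite /= !mulrBl !mul1r subr_eq0 => /eqP.
Qed.

End ComplementaryIdempotents.

Section CentralIdempotents.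
Variables (F : fieldType) (A : falgType F).

Lemma central_idem_peirce_ideal (c : A) :
  idem c -> (forall a, c * a = a * c) -> is_ideal (peirce c c).
Proof.
move=> c_idem c_central a x /memv_peirce-/(_ c_idem c_idem) x_cc.
have cx : c * x = x by rewrite -x_cc !mulrA c_idem.
have xc : x * c = x by rewrite -x_cc -mulrA c_idem.
split; apply/memv_peirce => //.
  by rewrite -mulrA -(mulrA a) xc c_central -mulrA xc.
by rewrite mulrA cx -mulrA -c_central mulrA xc.
Qed.

Lemma connected_central_idem (e : A) :
  connected_alg A -> idem e -> (forall a, e * a = a * e) -> e = 0 \/ e = 1.
Proof.
move=> connected e_idem e_central.
have f_idem : idem (1 - e) := mul_idem_split e_idem false false.
have f_central a : (1 - e) * a = a * (1 - e) by rewrite mulrBl mulrBr mul1r mulr1 e_central.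
have corner_id c x : idem c -> (forall a, c * a = a * c) -> c * x * c = c * x.
  by move=> c_idem c_central; rewrite -mulrA -c_central mulrA c_idem.
have [||eAe0|fAf0] := connected _ _ (central_idem_peirce_ideal e_idem e_central)
                                   (central_idem_peirce_ideal f_idem f_central).
- apply/vspaceP => x; rewrite memvf; apply/memv_addP.
  exists (e * x * e); first exact: peirce_corner.
  exists ((1 - e) * x * (1 - e)); first exact: peirce_corner.
  by rewrite !corner_id // mulrBl mul1r addrC subrK.
- apply/eqP; rewrite -subv0; apply/subvP => x /memv_capP[].
  move=> /memv_peirce-/(_ e_idem e_idem) <- /memv_peirce-/(_ f_idem f_idem) <-.
  have fe : (1 - e) * e = 0 := mul_idem_split e_idem false true.
  by rewrite memv0 !mulrA fe !mul0r.
- by left; apply/eqP; rewrite -memv0 -eAe0; apply/memv_peirce; rewrite ?e_idem.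
- right; apply/eqP; rewrite eq_sym -subr_eq0 -memv0 -fAf0.
  by apply/memv_peirce; rewrite ?f_idem.
Qed.

End CentralIdempotents.

Section TrivialIdempotents.
Variables (F : fieldType) (A : falgType F).
Hypothesis idem01 : forall e : A, idem e -> e = 0 \/ e = 1.

Lemma primitive_idem1 : primitive_idem (1 : A).
Proof.
split; first exact: mulr1; split; first exact: oner_neq0.
move=> e1 e2 /idem01[-> *|-> _ e2_0 _ _]; first by left.
by right; rewrite -e2_0 mul1r.
Qed.

Lemma complete_primitive_set1 : complete_primitive_set [:: 1 : A].
Proof.
split=> [[|] // _|[|] [|] //|]; first exact: primitive_idem1.
by rewrite big_seq1.
Qed.

Lemma size_complete_primitive_set (s : seq A) :
  complete_primitive_set s -> size s = 1%N.
Proof.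
case: s => [|e0 [|e1 s]] [primitive orthogonal sum1] //.
  by move: sum1; rewrite big_nil => /eqP; rewrite eq_sym oner_eq0.
have [e0_idem [e0_nz _]] := primitive 0%N isT.
have [_ [e1_nz _]] := primitive 1%N isT.
case: (idem01 e0_idem) => e0E; first by rewrite e0E eqxx in e0_nz.
by move: e1_nz; rewrite /= -[e1]mulr1 -e0E (orthogonal 1%N 0%N) ?eqxx.
Qed.

End TrivialIdempotents.

Lemma connected_ungraded_idem (F : fieldType) (A : falgType F) (e : A) :
  connected_alg A -> ~ has_nontrivial_grading A -> idem e -> e = 0 \/ e = 1.
Proof.
move=> connected ungraded e_idem.
exact: connected_central_idem connected e_idem (ungraded_idem_central e_idem ungraded).
Qed.

Theorem mainTheorem2 (k : closedFieldType) (A : falgType k) :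
  connected_alg A -> basic_alg A -> ~ has_nontrivial_grading A ->
  quiver_num_vertices A 1.
Proof.
move=> connected _ ungraded.
have idem01 e := @connected_ungraded_idem _ _ e connected ungraded.
split; first by exists [:: 1]; split; first exact: complete_primitive_set1 idem01.
exact: size_complete_primitive_set idem01.
Qed.
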